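(* Let $p$ be a prime, $S\subseteq\mathbb{Z}_p$ and $0<\alpha\leq 1$. Then $$\tfrac12\mathcal{C}_\alpha(S)\leq \mathcal{C}^{\mathrm{bsgs}}_\alpha(S)\leq \mathcal{C}^{\mathrm{bsgs1}}_\alpha(S).$$
   Context: For $L\subseteq\mathbb{Z}_p^2$, $I(L)=\{x\in\mathbb{Z}_p\mid \exists (a,b),(a',b')\in L,\ (a,b)\neq(a',b'),\ ax+b=a'x+b'\}$, and the generic $\alpha$-complexity $\mathcal{C}_\alpha(S)$ is the smallest $|L|$ with $|S\cap I(L)|\ge\alpha|S|$. For $L\subseteq\mathbb{Z}_p^2$ and $C\subseteq\mathbb{Z}_p$, $I(L,C)=\{x\in\mathbb{Z}_p\mid \exists (a,b)\in L,\ c\in C \text{ with } a\neq0 \text{ and } ax+b=c\}$. The baby-step giant-step $\alpha$-complexity $\mathcal{C}^{\mathrm{bsgs}}_\alpha(S)$ is the smallest integer $m$ such that there exist $L\subseteq\mathbb{Z}_p^2$ and $C\subseteq\mathbb{Z}_p$ with $|L|=|C|=m$ and $|I(L,C)\cap S|\geq\alpha|S|$. The BSGS-1 $\alpha$-complexity $\mathcal{C}^{\mathrm{bsgs1}}_\alpha(S)$ is defined in the same way but with the additional requirement $L\subseteq\{1\}\times\mathbb{Z}_p$ (equivalently, the smallest $n$ such that there are $X,Y\subseteq\mathbb{Z}_p$ with $|X|=|Y|=n$ and $|S\cap(X-Y)|\ge\alpha|S|$, where $X-Y=\{x-y: x\in X, y\in Y\}$). *)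

(* Z_p (p prime) is modelled as the prime field 'F_p. *)
From HB Require Import structures.
From mathcomp Require Import all_boot all_order all_algebra.
Set Implicit Arguments. Unset Strict Implicit. Unset Printing Implicit Defensive.
Import Order.TTheory GRing.Theory Num.Theory.
Local Open Scope ring_scope.

(* least n <= N satisfying P (equals N.+1 if none exists) *)
Definition least_upto (P : pred nat) (N : nat) : nat := find P (iota 0 N.+1).

Section Complexities.
Variable p : nat.
Local Notation F := 'F_p.

(* I(L) : points where two distinct lines of L meet *)
Definition Igen (L : {set F * F}) : {set F} :=
  [set x | [exists u : F * F, exists v : F * F,
      [&& u \in L, v \in L, u != v & u.1 * x + u.2 == v.1 * x + v.2]]].

Definition Ibsgs (L : {set F * F}) (C : {set F}) : {set F} :=
  [set x | [exists u : F * F, exists c : F,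
      [&& u \in L, c \in C, u.1 != 0 & u.1 * x + u.2 == c]]].

Variable R : realFieldType.

Definition gen_ok (S : {set F}) (alpha : R) (n : nat) : bool :=
  [exists L : {set F * F},
     (#|L| == n) && (alpha * #|S|%:R <= #|S :&: Igen L|%:R)].

Definition bsgs_ok (S : {set F}) (alpha : R) (n : nat) : bool :=
  [exists L : {set F * F}, exists C : {set F},
     [&& #|L| == n, #|C| == n & alpha * #|S|%:R <= #|Ibsgs L C :&: S|%:R]].

Definition bsgs1_ok (S : {set F}) (alpha : R) (n : nat) : bool :=
  [exists L : {set F * F}, exists C : {set F},
     [&& [forall u in L, u.1 == 1], #|L| == n, #|C| == n &
         alpha * #|S|%:R <= #|Ibsgs L C :&: S|%:R]].

(* Every admissible L has |L| <= |F*F|, and every admissible (L,C) has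
   |C| <= |F|, so searching up to these bounds gives the true minimum. *)
Definition Cgen (S : {set F}) (alpha : R) : nat :=
  least_upto (gen_ok S alpha) #|{: F * F}|.
Definition Cbsgs (S : {set F}) (alpha : R) : nat :=
  least_upto (bsgs_ok S alpha) #|{: F}|.
Definition Cbsgs1 (S : {set F}) (alpha : R) : nat :=
  least_upto (bsgs1_ok S alpha) #|{: F}|.

End Complexities.

(* A giant step c is the constant line x |-> c, and a line (a, b) with a != 0
   meets it exactly at the points x with a x + b = c; being non-constant, the
   line (a, b) differs from (0, c).  Hence L together with the constant lines
   of C is a generic configuration of at most 2|L| lines whose intersection
   points contain I(L, C), so C_alpha <= 2 C^bsgs_alpha.  The other inequality
   holds because BSGS-1 configurations are BSGS configurations; all minima are
   attained since the configuration of all lines x + b with C = Z_p already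
   catches every point. *)
From mathcomp Require Import all_boot all_order all_algebra.

Set Implicit Arguments.
Unset Strict Implicit.
Unset Printing Implicit Defensive.

Import Order.TTheory GRing.Theory Num.Theory.
Local Open Scope ring_scope.

Lemma least_upto_min (P : pred nat) (N n : nat) :
  (n <= N)%N -> P n -> (least_upto P N <= n)%N.
Proof.
move=> le_nN Pn; rewrite /least_upto leqNgt; apply/negP => lt_n_find.
by have := before_find 0%N lt_n_find; rewrite nth_iota ?add0n ?Pn.
Qed.

Lemma least_uptoP (P : pred nat) (N n : nat) :
  (n <= N)%N -> P n -> P (least_upto P N).
Proof.
move=> le_nN Pn.
have hasP_iota : has P (iota 0 N.+1).
  by apply/hasP; exists n => //; rewrite mem_iota add0n ltnS.
have := nth_find 0%N hasP_iota; rewrite nth_iota ?add0n //.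
by move: hasP_iota; rewrite has_find size_iota.
Qed.

Lemma least_upto_subpred (P Q : pred nat) (N n : nat) :
  subpred P Q -> (n <= N)%N -> P n -> (least_upto Q N <= least_upto P N)%N.
Proof.
move=> sPQ le_nN Pn; apply: least_upto_min.
  exact: leq_trans (least_upto_min le_nN Pn) le_nN.
exact/sPQ/(least_uptoP le_nN Pn).
Qed.

Section Complexities.

Variable p : nat.
Local Notation F := 'F_p.

Definition const_lines (C : {set F}) : {set F * F} := [set (0, c) | c in C].

Lemma card_const_lines (C : {set F}) : #|const_lines C| = #|C|.
Proof. by rewrite card_imset // => c c' []. Qed.

Lemma Ibsgs_sub_Igen (L : {set F * F}) (C : {set F}) :
  Ibsgs L C \subset Igen (L :|: const_lines C).
Proof.
apply/subsetP => x; rewrite !inE => /existsP [u /existsP [c]].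
case/and4P => uL cC u1_neq0 /eqP u_x.
apply/existsP; exists u; apply/existsP; exists (0, c).
rewrite !inE uL imset_f ?orbT //= mul0r add0r u_x eqxx andbT.
by apply: contraNneq u1_neq0 => ->.
Qed.

Variables (R : realFieldType) (S : {set F}) (alpha : R).

Lemma bsgs1_ok_card_F : alpha <= 1 -> bsgs1_ok S alpha #|{: F}|.
Proof.
move=> alpha_le1; pose Lone : {set F * F} := [set (1, b) | b in [set: F]].
apply/existsP; exists Lone; apply/existsP; exists [set: F].
have catch_all : Ibsgs Lone [set: F] = [set: F].
  apply/setP => x; rewrite !inE; apply/existsP; exists (1, 0).
  apply/existsP; exists x; rewrite !inE imset_f ?inE //= ?oner_neq0.
  by rewrite mul1r addr0.
apply/and4P; split.
- by apply/forallP => u; apply/implyP => /imsetP [b _ ->].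
- by rewrite card_imset ?cardsT // => b b' [].
- by rewrite cardsT.
- by rewrite catch_all setTI ler_piMl.
Qed.

Lemma bsgs1_ok_bsgs_ok : subpred (bsgs1_ok S alpha) (bsgs_ok S alpha).
Proof.
move=> n /existsP [L /existsP [C /and4P [_ cardL cardC catch]]].
by apply/existsP; exists L; apply/existsP; exists C; rewrite cardL cardC catch.
Qed.

Lemma gen_ok_of_bsgs_ok (n : nat) :
  bsgs_ok S alpha n -> exists2 m, (m <= n.*2)%N & gen_ok S alpha m.
Proof.
case/existsP => L /existsP [C /and3P [/eqP cardL /eqP cardC catch]].
exists #|L :|: const_lines C|.
  rewrite -addnn; apply: leq_trans (leq_card_setU _ _) _.
  by rewrite card_const_lines cardL cardC.
apply/existsP; exists (L :|: const_lines C); rewrite eqxx /=.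
apply: le_trans catch _; rewrite ler_nat setIC.
exact/subset_leq_card/setIS/Ibsgs_sub_Igen.
Qed.

Lemma gen_ok_le_card (m : nat) : gen_ok S alpha m -> (m <= #|{: F * F}|)%N.
Proof. by case/existsP => L /andP [/eqP <- _]; apply: max_card. Qed.

Lemma Cgen_le_double_Cbsgs : alpha <= 1 -> (Cgen S alpha <= (Cbsgs S alpha).*2)%N.
Proof.
move=> alpha_le1.
have bsgs_ok_F := bsgs1_ok_bsgs_ok (bsgs1_ok_card_F alpha_le1).
have [m le_m2 gen_ok_m] := gen_ok_of_bsgs_ok (least_uptoP (leqnn _) bsgs_ok_F).
apply: leq_trans le_m2; exact: least_upto_min (gen_ok_le_card gen_ok_m) gen_ok_m.
Qed.

Lemma Cbsgs_le_Cbsgs1 : alpha <= 1 -> (Cbsgs S alpha <= Cbsgs1 S alpha)%N.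
Proof.
move=> alpha_le1.
exact: least_upto_subpred bsgs1_ok_bsgs_ok (leqnn _) (bsgs1_ok_card_F alpha_le1).
Qed.

End Complexities.

Theorem proposition3 (R : realFieldType) (p : nat) (S : {set 'F_p}) (alpha : R) :
  prime p -> 0 < alpha -> alpha <= 1 ->
  (Cgen S alpha)%:R / 2 <= (Cbsgs S alpha)%:R :> R /\
  (Cbsgs S alpha <= Cbsgs1 S alpha)%N.
Proof.
move=> _ _ alpha_le1; split; last exact: Cbsgs_le_Cbsgs1.
rewrite ler_pdivrMr // -natrM ler_nat muln2.
exact: Cgen_le_double_Cbsgs.
Qed.
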